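(* Let $X$ be a countable two-dimensional subshift of finite type whose subpattern poset $(X/\!\approx, \succcurlyeq)$ has at least two elements. Then $X$ contains two doubly periodic points $x, y$ (i.e. each invariant under some shift by $(r,0)$ and by $(0,r)$ with $r>0$) with $x \not\approx y$.
   Context: A two-dimensional SFT is the set of configurations in $S^{\mathbb{Z}^2}$ ($S$ finite) avoiding a finite set of forbidden finite patterns. For configurations $x,y$, $x \succcurlyeq y$ means every finite pattern occurring in $y$ also occurs in $x$; $x \approx y$ means $x \succcurlyeq y$ and $y \succcurlyeq x$. The subpattern poset of $X$ is $(X/\!\approx, \succcurlyeq)$. *)

From mathcomp Require Import all_boot.
From Stdlib Require Import ZArith List.
Set Implicit Arguments.
Unset Strict Implicit.
Unset Printing Implicit Defensive.

Definition cell := (Z * Z)%type.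
Definition cadd (u v : cell) : cell := ((u.1 + v.1)%Z, (u.2 + v.2)%Z).

Definition config (S : finType) := cell -> S.

Definition pattern (S : finType) := list (cell * S).

Definition occurs (S : finType) (p : pattern S) (x : config S) : Prop :=
  exists v : cell, forall c a, List.In (c, a) p -> x (cadd c v) = a.

Definition is_SFT (S : finType) (X : config S -> Prop) : Prop :=
  exists F : list (pattern S),
    forall x : config S, X x <-> (forall p, List.In p F -> ~ occurs p x).

Definition countable_set (S : finType) (X : config S -> Prop) : Prop :=
  exists g : config S -> nat,
    forall x y, X x -> X y -> g x = g y -> x = y.

Definition subpat_ge (S : finType) (x y : config S) : Prop :=
  forall p : pattern S, occurs p y -> occurs p x.

Definition subpat_equiv (S : finType) (x y : config S) : Prop :=
  subpat_ge x y /\ subpat_ge y x.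

Definition doubly_periodic (S : finType) (x : config S) : Prop :=
  exists r : Z, (0 < r)%Z /\
    forall c : cell, x (cadd c (r, 0%Z)) = x c /\ x (cadd c (0%Z, r)) = x c.

(* Recurrence in the countable compact set [X] (an isolated point of
   a closed set of "minimal" points, found by a Baire argument) first gives a
   doubly periodic point [p], say with periods (r,0) and (0,r).  Call a cell
   of a configuration a defect if the r-box around it is not a window of [p].
   If no point of [X] had defects, every point would be a translate of [p],
   so all points would be equivalent; hence some point has a defect, and the
   recurrence argument applied to points with a defect at the origin yields a
   defective [z] in [X] which returns to itself along any sequence of its
   defects.  Consequently, quantities that do not grow along periods of [z]
   are bounded on its defects.  According to the rank of the period lattice
   of [z], its defects lie in a box, lie in a strip along its unique period
   direction, or [z] is itself doubly periodic; in the first two cases [z]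
   is a translate of [p] outside the box/strip, and gluing copies of the
   box/strip gives a doubly periodic point of [X] keeping the defect at the
   origin.  Such a point is not equivalent to [p], as the r-box at its origin
   does not occur in [p]. *)

From mathcomp Require Import all_boot zify.
From Stdlib Require Import ZArith List Lia.
From Stdlib Require Import Classical ClassicalEpsilon FunctionalExtensionality.
Set Implicit Arguments.
Unset Strict Implicit.
Unset Printing Implicit Defensive.

Local Open Scope Z_scope.

Definition csub (c u : cell) : cell := (c.1 - u.1, c.2 - u.2).

Lemma cell_eq (a b : cell) : a.1 = b.1 -> a.2 = b.2 -> a = b.
Proof. by case: a => ? ?; case: b => ? ? /= -> ->. Qed.

Lemma config_eq_at (S : finType) (x : config S) (a b : cell) :
  a.1 = b.1 -> a.2 = b.2 -> x a = x b.
Proof. by move=> e1 e2; rewrite (cell_eq e1 e2). Qed.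

Ltac cell_lia :=
  first [apply: cell_eq | apply: config_eq_at]; cbn [cadd csub fst snd]; lia.

Definition lin (al be : Z) (c : cell) := al * c.1 + be * c.2.

Lemma lin_add al be c d : lin al be (cadd c d) = lin al be c + lin al be d.
Proof. by rewrite /lin /=; ring. Qed.

Section Geometry.
Variable S : finType.
Implicit Types x y z : config S.

Definition shift (v : cell) x : config S := fun c => x (cadd c v).

Definition agree (N : Z) x y :=
  forall d : cell, Z.abs d.1 <= N -> Z.abs d.2 <= N -> x d = y d.

Definition period x (v : cell) := forall c, x (cadd c v) = x c.

Lemma shift_shift u v x : shift u (shift v x) = shift (cadd u v) x.
Proof. apply: functional_extensionality => c; rewrite /shift; cell_lia. Qed.

Lemma shift0 x : shift (0, 0) x = x.
Proof. apply: functional_extensionality => c; rewrite /shift; cell_lia. Qed.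

Lemma period_of_shift v x : shift v x = x -> period x v.
Proof. by move=> h c; have := congr1 (fun f => f c) h. Qed.

Lemma agree_sym N x y : agree N x y -> agree N y x.
Proof. by move=> H d h1 h2; rewrite H. Qed.

Lemma agree_trans N x y z : agree N x y -> agree N y z -> agree N x z.
Proof. by move=> H H' d h1 h2; rewrite H // H'. Qed.

Lemma agree_mono N M x y : N <= M -> agree M x y -> agree N x y.
Proof. by move=> h H d h1 h2; apply: H; lia. Qed.

Lemma agree_shift N u x y :
  agree (N + Z.abs u.1 + Z.abs u.2) x y -> agree N (shift u x) (shift u y).
Proof. by move=> H d h1 h2; apply: H; cbn [cadd fst snd]; lia. Qed.

Lemma period_lin x v w (a b : Z) : period x v -> period x w ->
  period x (a * v.1 + b * w.1, a * v.2 + b * w.2).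
Proof.
have mul : forall u (n : Z), period x u -> period x (n * u.1, n * u.2).
  move=> u n Hu; have nat_mul : forall k : nat, period x (Z.of_nat k * u.1, Z.of_nat k * u.2).
    elim=> [|k IH] c; first cell_lia.
    by rewrite -(IH c) -(Hu (cadd c (Z.of_nat k * u.1, Z.of_nat k * u.2))); cell_lia.
  case: (Z_le_gt_dec 0 n) => hn c.
    by rewrite -(nat_mul (Z.to_nat n) c) Z2Nat.id //; cell_lia.
  rewrite -(nat_mul (Z.to_nat (- n)) (cadd c (n * u.1, n * u.2))) Z2Nat.id; [cell_lia | lia].
move=> Hv Hw c.
rewrite -(mul v a Hv c) -(mul w b Hw (cadd c (a * v.1, a * v.2))); cell_lia.
Qed.

Lemma period_ext x v w : period x v -> v.1 = w.1 -> v.2 = w.2 -> period x w.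
Proof. by move=> H e1 e2; rewrite -(cell_eq e1 e2). Qed.

(* Two linearly independent periods make a configuration doubly periodic:
   with D their determinant, both (D,0) and (0,D) are periods. *)
Lemma doubly_periodic_of_periods x h t : period x h -> period x t ->
  h.2 * t.1 - h.1 * t.2 <> 0 -> doubly_periodic x.
Proof.
move=> Hh Ht HD; set D := h.2 * t.1 - h.1 * t.2.
have P1 : forall s, period x (s * D, 0).
  move=> s; apply: (period_ext (period_lin (- (s * t.2)) (s * h.2) Hh Ht));
  cbn [fst snd]; rewrite /D; lia.
have P2 : forall s, period x (0, s * D).
  move=> s; apply: (period_ext (period_lin (s * t.1) (- (s * h.1)) Hh Ht));
  cbn [fst snd]; rewrite /D; lia.
exists (Z.abs D); split; first lia.
have [s hs] : exists s, Z.abs D = s * D.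
  by case: (Z_le_gt_dec 0 D) => ?; [exists 1 | exists (-1)]; lia.
by move=> c; rewrite hs; split; [exact: P1 | exact: P2].
Qed.

End Geometry.

Section Phase.
Variable S : finType.
Implicit Types x y z : config S.
Variables (p : config S) (r R : Z).
Hypotheses (hr : 0 < r) (hrR : r <= R) (pr1 : period p (r, 0)) (pr2 : period p (0, r)).

Definition phase_at z c u := forall d : cell, Z.abs d.1 <= R -> Z.abs d.2 <= R ->
  z (cadd c d) = p (csub (cadd c d) u).

Definition locally_p z c := exists u, phase_at z c u.

Definition same_phase u u' := forall w : cell, p (csub w u) = p (csub w u').

Lemma p_period (a b : Z) c : p (c.1 + a * r, c.2 + b * r) = p c.
Proof. by rewrite -(period_lin a b pr1 pr2 c); cell_lia. Qed.

Lemma same_phase_of_square u u' (a : cell) :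
  (forall w : cell, a.1 <= w.1 < a.1 + r -> a.2 <= w.2 < a.2 + r ->
     p (csub w u) = p (csub w u')) -> same_phase u u'.
Proof.
move=> H w.
set q1 := (w.1 - a.1) / r; set q2 := (w.2 - a.2) / r.
have E1 := Z.div_mod (w.1 - a.1) r ltac:(lia).
have E2 := Z.div_mod (w.2 - a.2) r ltac:(lia).
have B1 := Z.mod_pos_bound (w.1 - a.1) r hr.
have B2 := Z.mod_pos_bound (w.2 - a.2) r hr.
set w' : cell := (w.1 - q1 * r, w.2 - q2 * r).
have reduce : forall v, p (csub w v) = p (csub w' v).
  by move=> v; rewrite -(p_period q1 q2 (csub w' v)) /w'; cell_lia.
by rewrite !reduce; apply: H; rewrite /w' /=; rewrite -/q1 -/q2 in E1 E2; lia.
Qed.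

Lemma phase_at_same z c u u' : phase_at z c u -> same_phase u u' -> phase_at z c u'.
Proof. by move=> H E d h1 h2; rewrite H // E. Qed.

Lemma phase_at_center z c u : phase_at z c u -> z c = p (csub c u).
Proof.
by move=> H; have := H (0, 0) ltac:(cbn; lia) ltac:(cbn; lia); rewrite (_ : cadd c (0, 0) = c) //; cell_lia.
Qed.

(* The phases at two adjacent (or equal) cells agree: their [R]-boxes share
   an [r x r] square. *)
Lemma phase_step z c s u u' : phase_at z c u -> phase_at z (cadd c s) u' ->
  Z.abs s.1 <= 1 -> Z.abs s.2 <= 1 -> same_phase u u'.
Proof.
move=> H H' hs1 hs2.
apply: (same_phase_of_square (a := (c.1 - R + 1, c.2 - R + 1))) => w /= hw1 hw2.
have e1 := H (w.1 - c.1, w.2 - c.2) ltac:(cbn; lia) ltac:(cbn; lia).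
have e2 := H' (w.1 - c.1 - s.1, w.2 - c.2 - s.2) ltac:(cbn; lia) ltac:(cbn; lia).
rewrite (_ : cadd c _ = w) in e1; last cell_lia.
rewrite (_ : cadd (cadd c s) _ = w) in e2; last cell_lia.
by rewrite -e1 -e2.
Qed.

Lemma phase_unique z c u u' : phase_at z c u -> phase_at z c u' -> same_phase u u'.
Proof.
move=> H H'; apply: (phase_step (s := (0, 0)) H); try (cbn; lia).
by rewrite (_ : cadd c (0, 0) = c) //; cell_lia.
Qed.

Section Region.
Variables (z : config S) (Reg : cell -> Prop).
Hypothesis Reg_good : forall c, Reg c -> locally_p z c.

Lemma transport (s : cell) : Z.abs s.1 <= 1 -> Z.abs s.2 <= 1 ->
  (forall c, Reg c -> Reg (cadd c s)) -> forall (n : nat) c u,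
  Reg c -> phase_at z c u ->
  Reg (cadd c (Z.of_nat n * s.1, Z.of_nat n * s.2)) /\
  phase_at z (cadd c (Z.of_nat n * s.1, Z.of_nat n * s.2)) u.
Proof.
move=> hs1 hs2 Hs; elim=> [|n IH] c u hc hu.
  by rewrite (_ : cadd c _ = c) //; cell_lia.
have [hc' hu'] := IH c u hc hu.
rewrite (_ : cadd c _ = cadd (cadd c (Z.of_nat n * s.1, Z.of_nat n * s.2)) s);
  last cell_lia.
have hcs := Hs _ hc'; have [v hv] := Reg_good hcs; split => //.
exact: (phase_at_same hv (fun w => esym (phase_step hu' hv hs1 hs2 w))).
Qed.

Lemma region_phase e1 e2 c0 : Z.abs e1 = 1 -> Z.abs e2 = 1 ->
  (forall c, Reg c -> Reg (cadd c (e1, 0))) ->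
  (forall c, Reg c -> Reg (cadd c (0, e2))) -> Reg c0 ->
  exists u, forall c, Reg c -> z c = p (csub c u).
Proof.
move=> he1 he2 H1 H2 hc0; have [u hu] := Reg_good hc0; exists u => c hc.
have [u' hu'] := Reg_good hc.
(* walk from [c0] and from [c] to a common cell *)
have meet : forall e a a' : Z, Z.abs e = 1 ->
    exists n n' : nat, a + Z.of_nat n * e = a' + Z.of_nat n' * e.
  move=> e a a' he; have ee : e * e = 1 by lia.
  case: (Z_le_gt_dec 0 (e * (a' - a))) => h.
    by exists (Z.to_nat (e * (a' - a))), 0%nat; rewrite Z2Nat.id //; nia.
  by exists 0%nat, (Z.to_nat (e * (a - a'))); rewrite Z2Nat.id; nia.
have walk : forall (n m : nat) c v, Reg c -> phase_at z c v ->
    phase_at z (c.1 + Z.of_nat n * e1, c.2 + Z.of_nat m * e2) v.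
  move=> n m c1 v hc1 hv.
  have [h1 h2] := transport (s := (e1, 0)) ltac:(cbn; lia) ltac:(cbn; lia) H1 n hc1 hv.
  have [_ h4] := transport (s := (0, e2)) ltac:(cbn; lia) ltac:(cbn; lia) H2 m h1 h2.
  by move: h4; rewrite (_ : cadd _ _ = (c1.1 + Z.of_nat n * e1, c1.2 + Z.of_nat m * e2)) //; cell_lia.
have [n1 [n1' E1]] := meet e1 c0.1 c.1 he1.
have [n2 [n2' E2]] := meet e2 c0.2 c.2 he2.
have T1 := walk n1 n2 c0 u hc0 hu; have T2 := walk n1' n2' c u' hc hu'.
rewrite E1 E2 in T1.
by rewrite (phase_at_center hu') (phase_unique T2 T1).
Qed.

End Region.

Lemma half_plane_phase z a b W : (a, b) <> (0, 0) ->
  (forall c, W <= lin a b c -> locally_p z c) ->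
  exists u, forall c, W <= lin a b c -> z c = p (csub c u).
Proof.
move=> hab hgood.
have hab2 : 1 <= a * a + b * b.
  case: (Z.eq_dec a 0) => [ea|na]; last nia.
  case: (Z.eq_dec b 0) => [eb|nb]; last nia.
  by case: hab; rewrite ea eb.
have [e1 [he1 ha]] : exists e, Z.abs e = 1 /\ 0 <= a * e.
  by case: (Z_le_gt_dec 0 a) => ?; [exists 1 | exists (-1)]; lia.
have [e2 [he2 hb]] : exists e, Z.abs e = 1 /\ 0 <= b * e.
  by case: (Z_le_gt_dec 0 b) => ?; [exists 1 | exists (-1)]; lia.
apply: (region_phase hgood (c0 := (Z.abs W * a, Z.abs W * b)) he1 he2).
- by move=> c hc; rewrite lin_add /lin /= in hc *; lia.
- by move=> c hc; rewrite lin_add /lin /= in hc *; lia.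
- by rewrite /lin /=; nia.
Qed.

(* A configuration without defects outside the box [-B, B]^2 carries a
   single translate of [p] outside the box: the four half-planes overlap. *)
Lemma frame_phase z B : 
  (forall c, B <= Z.abs c.1 \/ B <= Z.abs c.2 -> locally_p z c) ->
  exists u, forall c, B <= Z.abs c.1 \/ B <= Z.abs c.2 -> z c = p (csub c u).
Proof.
move=> hgood.
have side : forall a b, Z.abs a + Z.abs b = 1 ->
    exists u, forall c, B <= lin a b c -> z c = p (csub c u).
  move=> a b hab; apply: half_plane_phase; first by case=> ea eb; lia.
  by move=> c hc; apply: hgood; rewrite /lin in hc; nia.
have [u1 hu1] := side 1 0 erefl; have [u2 hu2] := side 0 1 erefl.
have [u3 hu3] := side (-1) 0 erefl; have [u4 hu4] := side 0 (-1) erefl.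
(* neighbouring half-planes share corner squares *)
have corner : forall ui uj (a : cell),
    (forall w : cell, a.1 <= w.1 < a.1 + r -> a.2 <= w.2 < a.2 + r ->
       z w = p (csub w ui) /\ z w = p (csub w uj)) -> same_phase ui uj.
  move=> ui uj a H; apply: (same_phase_of_square (a := a)) => w h1 h2.
  by have [<- <-] := H w h1 h2.
have E12 : same_phase u1 u2.
  by apply: (corner _ _ (B, B)) => w /= *; rewrite -hu1 -?hu2 // /lin; lia.
have E32 : same_phase u3 u2.
  by apply: (corner _ _ (- B - r + 1, B)) => w /= *; rewrite -hu3 -?hu2 // /lin; lia.
have E14 : same_phase u1 u4.
  by apply: (corner _ _ (B, - B - r + 1)) => w /= *; rewrite -hu1 -?hu4 // /lin; lia.
exists u1 => c hc.
have [h|[h|[h|h]]] : B <= lin 1 0 c \/ B <= lin (-1) 0 c \/ B <= lin 0 1 c \/ B <= lin 0 (-1) c.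
  by rewrite /lin; lia.
- exact: hu1.
- by rewrite (hu3 c h) E32 E12.
- by rewrite (hu2 c h) E12.
- by rewrite (hu4 c h) E14.
Qed.

End Phase.

(* Given a linear form [lin al be] and a vector [t] with
   [lin al be t = T > 0], [glue z] repeats the strip [m <= lin c < m + T]
   of [z] with period [t].  It stays in an SFT as soon as [z] is already
   [t]-invariant on a band below the strip wider than the forbidden patterns. *)

Lemma lin_bound (a b c1 c2 K : Z) : Z.abs c1 <= K -> Z.abs c2 <= K ->
  Z.abs (a * c1 + b * c2) <= (Z.abs a + Z.abs b) * K.
Proof.
move=> h1 h2; have t := Z.abs_triangle (a * c1) (b * c2); rewrite !Z.abs_mul in t.
have : Z.abs a * Z.abs c1 <= Z.abs a * K by apply: Z.mul_le_mono_nonneg_l; lia.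
have : Z.abs b * Z.abs c2 <= Z.abs b * K by apply: Z.mul_le_mono_nonneg_l; lia.
lia.
Qed.

Definition patterns_within (S : finType) (F : list (pattern S)) (K : Z) :=
  forall q c a, List.In q F -> List.In (c, a) q -> Z.abs c.1 <= K /\ Z.abs c.2 <= K.

Section Glue.
Variable S : finType.
Variables (X : config S -> Prop) (F : list (pattern S)) (K : Z).
Hypothesis HX : forall x, X x <-> (forall q, List.In q F -> ~ occurs q x).
Hypothesis HK : patterns_within F K.
Hypothesis hK0 : 0 <= K.

Variables (z : config S) (al be : Z) (t : cell) (T m : Z).
Hypothesis hT : 0 < T.
Hypothesis hlt : lin al be t = T.

Definition strip_index (c : cell) := (lin al be c - m) / T.
Definition glue : config S :=
  fun c => z (c.1 - strip_index c * t.1, c.2 - strip_index c * t.2).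

Lemma strip_index_bounds c :
  strip_index c * T <= lin al be c - m < strip_index c * T + T.
Proof.
have E := Z.div_mod (lin al be c - m) T ltac:(lia).
have B := Z.mod_pos_bound (lin al be c - m) T hT; rewrite /strip_index; lia.
Qed.

Lemma lin_sub c k : lin al be (c.1 - k * t.1, c.2 - k * t.2) = lin al be c - k * T.
Proof. by rewrite -hlt /lin /=; ring. Qed.

Lemma glue_period : period glue t.
Proof.
move=> c; rewrite /glue.
have -> : strip_index (cadd c t) = strip_index c + 1.
  rewrite /strip_index (_ : lin al be (cadd c t) - m = (lin al be c - m) + 1 * T).
    by rewrite Z.div_add; lia.
  by move: hlt; rewrite /lin; cbn [cadd fst snd]; lia.
cell_lia.
Qed.

Lemma glue_period_along h : lin al be h = 0 -> period z h -> period glue h.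
Proof.
move=> hh hzh c; rewrite /glue.
have -> : strip_index (cadd c h) = strip_index c.
  by rewrite /strip_index (_ : lin al be (cadd c h) = lin al be c) //;
     move: hh; rewrite /lin; cbn [cadd fst snd]; lia.
by rewrite -(hzh (c.1 - strip_index c * t.1, c.2 - strip_index c * t.2)); cell_lia.
Qed.

Lemma glue_on_strip c : 0 <= lin al be c - m < T -> glue c = z c.
Proof. by move=> h; rewrite /glue /strip_index Z.div_small //; cell_lia. Qed.

Let D := (Z.abs al + Z.abs be) * K.
Hypothesis hTD : 2 * D < T.
Hypothesis hband : forall d, m - 2 * D <= lin al be d < m -> z (cadd d t) = z d.

Lemma glue_window v : exists k, forall e : cell,
  Z.abs (lin al be e - lin al be v) <= D ->
  glue e = z (e.1 - k * t.1, e.2 - k * t.2).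
Proof.
set s := lin al be v - m; set k0 := s / T; set rho := s mod T.
have E := Z.div_mod s T ltac:(lia); have B := Z.mod_pos_bound s T hT.
rewrite -/k0 -/rho in E.
have D0 : 0 <= D by apply: Z.mul_nonneg_nonneg; lia.
(* the window lies within [2 D] below the strip [k] and meets no strip
   above it, so it meets only the strips [k - 1] and [k] *)
have window_in : forall k, (forall e : cell, Z.abs (lin al be e - lin al be v) <= D ->
      k * T - 2 * D <= lin al be e - m < k * T + T) ->
    forall e : cell, Z.abs (lin al be e - lin al be v) <= D ->
    glue e = z (e.1 - k * t.1, e.2 - k * t.2).
  move=> k hk e he; have [b1 b2] := strip_index_bounds e; have [l1 l2] := hk e he.
  have hke : strip_index e = k \/ strip_index e = k - 1.
    have h1 : (strip_index e - k) * T < 1 * T by lia.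
    have h2 : (-2) * T < (strip_index e - k) * T by lia.
    apply Z.mul_lt_mono_pos_r in h1; apply Z.mul_lt_mono_pos_r in h2; lia.
  rewrite /glue; case: hke => hke; rewrite hke; first by [].
  set d : cell := (e.1 - k * t.1, e.2 - k * t.2).
  have hd : m - 2 * D <= lin al be d < m by rewrite /d lin_sub; lia.
  by rewrite -(hband hd) /d; cell_lia.
case: (Z_lt_le_dec (rho + D) T) => hc; [exists k0 | exists (k0 + 1)];
  by apply: window_in => e he; lia.
Qed.

Lemma glue_in_X : X z -> X glue.
Proof.
move=> /HX Xz; apply/HX => q hq [v hv]; have [k hk] := glue_window v.
apply: (Xz q hq); exists (v.1 - k * t.1, v.2 - k * t.2) => c a hca.
rewrite -(hv c a hca) hk; first cell_lia.
have [h1 h2] := HK hq hca; have := lin_bound (a := al) (b := be) h1 h2.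
by rewrite /lin /D /=; nia.
Qed.

End Glue.

(* Compactness of [S^(Z^2)]: every sequence of configurations has a cluster
   point, obtained by the usual diagonal pigeonhole argument on windows. *)

Definition infinitely (P : nat -> Prop) := forall k0, exists k, (k0 <= k)%nat /\ P k.

Lemma pigeonhole (T : finType) (P : nat -> Prop) (f : nat -> T) :
  infinitely P -> exists t, infinitely (fun k => P k /\ f k = t).
Proof.
move=> HP; apply: NNPP => Hn.
have bound : forall t, exists b, forall k, (b <= k)%nat -> ~ (P k /\ f k = t).
  move=> t; apply: NNPP => Hb; apply: Hn; exists t => k0.
  apply: NNPP => Hk; apply: Hb; exists k0 => k hk hpk; apply: Hk; by exists k.
have bound_all : forall l : list T, exists b, forall t, t \in l ->
    forall k, (b <= k)%nat -> ~ (P k /\ f k = t).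
  elim=> [|t l [b Hb]]; first by exists 0%nat.
  have [b' Hb'] := bound t; exists (maxn b b') => t'.
  rewrite inE => /orP [/eqP -> | ht] k hk; first by apply: Hb'; lia.
  by apply: Hb => //; lia.
have [b Hb] := bound_all (enum T); have [k [hk hpk]] := HP b.
exact: (Hb (f k) (mem_enum _ _) k hk).
Qed.

Definition cluster_point (S : finType) (xs : nat -> config S) (w : config S) :=
  forall (N : nat), infinitely (fun k => agree (Z.of_nat N) (xs k) w).

Section Compactness.
Variable S : finType.
Implicit Types x y : config S.

Definition box_cell (n : nat) (i : 'I_(n.*2.+1) * 'I_(n.*2.+1)) : cell :=
  (Z.of_nat i.1 - Z.of_nat n, Z.of_nat i.2 - Z.of_nat n).
Definition window_type (n : nat) := {ffun 'I_(n.*2.+1) * 'I_(n.*2.+1) -> S}.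
Definition window (n : nat) x : window_type n := [ffun i => x (box_cell i)].

Lemma window_eq n x y : window n x = window n y <-> agree (Z.of_nat n) x y.
Proof.
split=> [H d h1 h2 | H].
- pose i : 'I_(n.*2.+1) * 'I_(n.*2.+1) :=
    (inord (Z.to_nat (d.1 + Z.of_nat n)), inord (Z.to_nat (d.2 + Z.of_nat n))).
  have <- : box_cell i = d by rewrite /box_cell /i /= !inordK; [cell_lia | lia | lia].
  by have := congr1 (fun f : window_type n => f i) H; rewrite !ffunE.
- apply/ffunP => i; rewrite !ffunE; apply: H; rewrite /box_cell /=.
  + by have := ltn_ord i.1; move: (nat_of_ord i.1) => k; lia.
  + by have := ltn_ord i.2; move: (nat_of_ord i.2) => k; lia.
Qed.

Section Diagonal.
Variable xs : nat -> config S.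

Definition refine (n : nat) (P : nat -> Prop) : nat -> Prop :=
  let t := epsilon (inhabits (window n (xs 0)))
             (fun t => infinitely (fun k => P k /\ window n (xs k) = t)) in
  fun k => P k /\ window n (xs k) = t.

Fixpoint level (n : nat) : nat -> Prop :=
  refine n (if n is n'.+1 then level n' else fun _ => True).

Lemma level_infinite n : infinitely (level n).
Proof.
have refine_inf : forall m P, infinitely P -> infinitely (refine m P).
  move=> m P HP; apply: (epsilon_spec (inhabits (window m (xs 0)))
    (fun t => infinitely (fun k => P k /\ window m (xs k) = t))).
  exact: pigeonhole.
elim: n => [|n IH] /=; apply: refine_inf => // k0; by exists k0.
Qed.

Lemma level_mono n m k : (m <= n)%nat -> level n k -> level m k.
Proof.
elim: n => [|n IH] hm hk; first by have -> : m = 0%nat by lia.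
have [->|hle] : m = n.+1 \/ (m <= n)%nat by lia.
  done.
by apply: IH => //; case: hk.
Qed.

Lemma level_agree n k j : level n k -> level n j -> agree (Z.of_nat n) (xs k) (xs j).
Proof. by move=> hk hj; apply/window_eq; case: n hk hj => [|n] [_ ->] [_ ->]. Qed.

Definition level_rep n := epsilon (inhabits 0%nat) (level n).

Definition cluster : config S :=
  fun c => xs (level_rep (Z.to_nat (Z.max (Z.abs c.1) (Z.abs c.2)))) c.

Lemma cluster_spec : cluster_point xs cluster.
Proof.
move=> N k0; have [k [hk hl]] := level_infinite N k0; exists k; split=> // d h1 h2.
set n := Z.to_nat (Z.max (Z.abs d.1) (Z.abs d.2)).
have hn : (n <= N)%nat by rewrite /n; lia.
have hrep : level n (level_rep n).
  apply: (epsilon_spec (inhabits 0%nat) (level n)).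
  by have [j [_ hj]] := level_infinite n 0%nat; exists j.
by apply: (level_agree (level_mono hn hl) hrep); rewrite /n; lia.
Qed.

End Diagonal.
End Compactness.

(* A nonempty countable closed set of configurations has an isolated point
   (the Baire category argument): otherwise one builds a convergent sequence
   whose limit escapes every element of an enumeration of the set. *)

Section Isolated.
Variable S : finType.
Implicit Types x y z w : config S.
Variables (A : config S -> Prop) (g : config S -> nat).
Hypothesis g_inj : forall x y, A x -> A y -> g x = g y -> x = y.
Hypothesis A_closed : forall xs w, cluster_point xs w -> (forall k, A (xs k)) -> A w.

Definition isolated z (n : nat) := forall y, A y -> agree (Z.of_nat n) y z -> y = z.

Section NoIsolated.
Hypothesis no_isolated : forall z n, A z -> ~ isolated z n.

Lemma escape z n e : A z -> exists y m, A y /\ agree (Z.of_nat n) y z /\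
  (n < m)%nat /\ ~ agree (Z.of_nat m) y e.
Proof.
move=> hz.
have [y [hy [ha hne]]] : exists y, A y /\ agree (Z.of_nat n) y z /\ y <> e.
  case: (classic (z = e)) => [<-|hze]; last by exists z.
  apply: NNPP => H; apply: (no_isolated (n := n) hz) => y hy ha.
  by apply: NNPP => hyz; apply: H; exists y.
have [c hc] : exists c, y c <> e c.
  apply: NNPP => H; apply: hne; apply: functional_extensionality => c.
  by apply: NNPP => H'; apply: H; exists c.
exists y, (maxn n.+1 (Z.to_nat (Z.max (Z.abs c.1) (Z.abs c.2)))).
by do !split => //; [lia | move=> H; apply: hc; apply: H; lia].
Qed.

Lemma escaping_sequence (e : nat -> config S) z0 : A z0 ->
  exists (ys : nat -> config S) (ns : nat -> nat), forall k, A (ys k) /\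
    (ns k < ns k.+1)%nat /\ agree (Z.of_nat (ns k)) (ys k.+1) (ys k) /\
    ~ agree (Z.of_nat (ns k.+1)) (ys k.+1) (e k).
Proof.
move=> hz0.
pose step k (q q' : config S * nat) := [/\ A q'.1, agree (Z.of_nat q.2) q'.1 q.1,
  (q.2 < q'.2)%nat & ~ agree (Z.of_nat q'.2) q'.1 (e k)].
pose next k q := epsilon (inhabits q) (step k q).
have next_spec : forall k q, A q.1 -> step k q (next k q).
  move=> k [y n] hy; apply: (epsilon_spec (inhabits (y, n)) (step k (y, n))).
  have [y' [m [hy' [ha [hm hne]]]]] := escape n (e k) hy; by exists (y', m).
pose fix sq k := if k is k'.+1 then next k' (sq k') else (z0, 0%nat).
have sqA : forall k, A (sq k).1.
  by elim=> [|k IH] //=; case: (next_spec k _ IH).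
exists (fun k => (sq k).1), (fun k => (sq k).2) => k.
by case: (next_spec k _ (sqA k)) => ? ? ? ?; split.
Qed.

End NoIsolated.

Lemma isolated_point z0 : A z0 -> exists z n, A z /\ isolated z n.
Proof.
move=> hz0; apply: NNPP => Hn.
have no_iso : forall z n, A z -> ~ isolated z n by move=> z n hz hi; apply: Hn; exists z, n.
pose en k := epsilon (inhabits z0) (fun x => A x /\ g x = k).
have en_g : forall x, A x -> en (g x) = x.
  move=> x hx; have [h1 h2] : A (en (g x)) /\ g (en (g x)) = g x.
    by apply: (epsilon_spec (inhabits z0) (fun x' => A x' /\ g x' = g x)); exists x.
  exact: g_inj.
have [ys [ns hs]] := escaping_sequence no_iso en hz0.
have chain : forall i j, (i <= j)%nat ->
    (ns i <= ns j)%nat /\ agree (Z.of_nat (ns i)) (ys j) (ys i).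
  move=> i; elim=> [|j IH] hij; first by have -> : i = 0%nat by lia.
  have [->|hle] : i = j.+1 \/ (i <= j)%nat by lia.
    by [].
  have [_ [hn [ha _]]] := hs j; have [IH1 IH2] := IH hle.
  split; first lia.
  by apply: agree_trans IH2; apply: agree_mono ha; lia.
set w := cluster ys; have hw := cluster_spec ys.
have Aw : A w by apply: A_closed hw _ => k; case: (hs k).
set k := g w; have [j [hj ha]] := hw (ns k.+1) k.+1.
have [_ [_ [_ hne]]] := hs k; apply: hne; rewrite /k en_g //.
exact: agree_trans (agree_sym (chain _ _ hj).2) ha.
Qed.

End Isolated.

(* In a countable closed shift-invariant set [X], take a point
   whose orbit closure has minimal languages among those meeting a local
   property [def]; the points of [X] satisfying [def] with these languages form
   a closed countable set, whose isolated point [z] is recurrent: along any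
   sequence of translates of [z] satisfying [def], some fixed translate
   returns exactly to [z] infinitely often. *)

Definition classicb (P : Prop) : bool := if excluded_middle_informative P then true else false.

Lemma classicbP (P : Prop) : reflect P (classicb P).
Proof. by rewrite /classicb; case: excluded_middle_informative => h; constructor. Qed.

Lemma least_nat (Q : nat -> Prop) : (exists n, Q n) ->
  exists n, Q n /\ forall m, Q m -> (n <= m)%nat.
Proof.
move=> [n0 hn0]; have hQ : exists n, classicb (Q n) by exists n0; apply/classicbP.
case: (ex_minnP hQ) => n /classicbP hn hmin.
by exists n; split=> // m hm; apply: hmin; apply/classicbP.
Qed.

Section Recurrence.
Variable S : finType.
Implicit Types x y z w : config S.
Variable X : config S -> Prop.
Hypothesis X_shift : forall x v, X x -> X (shift v x).
Hypothesis X_closed : forall w, (forall N : nat, exists y, X y /\ agree (Z.of_nat N) y w) -> X w.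
Variable g : config S -> nat.
Hypothesis g_inj : forall x y, X x -> X y -> g x = g y -> x = y.
Variables (def : config S -> Prop) (Rd : nat).
Hypothesis def_local : forall x y, agree (Z.of_nat Rd) x y -> def x -> def y.
Variable x0 : config S.
Hypotheses (X_x0 : X x0) (def_x0 : def x0).

Definition language (n : nat) y : {set window_type S n} :=
  [set t | classicb (exists v, window n (shift v y) = t)].

Lemma in_language n y t : reflect (exists v, window n (shift v y) = t) (t \in language n y).
Proof. by rewrite inE; apply: classicbP. Qed.

Lemma language_shift n u y : language n (shift u y) = language n y.
Proof.
apply/setP => t; apply/in_language/in_language => [[v hv] | [v hv]].
  by exists (cadd v u); rewrite -shift_shift.
exists (v.1 - u.1, v.2 - u.2); rewrite shift_shift -hv.
by congr (window n (shift _ y)); cell_lia.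
Qed.

Lemma cluster_X xs w : cluster_point xs w -> (forall k, X (xs k)) -> X w.
Proof. by move=> hl hx; apply: X_closed => N; have [k [_ hk]] := hl N 0%nat; exists (xs k). Qed.

Lemma cluster_def xs w : cluster_point xs w -> (forall k, def (xs k)) -> def w.
Proof. by move=> hl hx; have [k [_ hk]] := hl Rd 0%nat; exact: def_local hk (hx k). Qed.

Lemma cluster_language xs w n t : cluster_point xs w ->
  t \in language n w -> infinitely (fun k => t \in language n (xs k)).
Proof.
move=> hl /in_language [v hv] k0.
have [k [hk ha]] := hl (Z.to_nat (Z.of_nat n + Z.abs v.1 + Z.abs v.2)) k0.
exists k; split=> //; apply/in_language; exists v; rewrite -hv; apply/window_eq.
by apply: agree_shift; apply: agree_mono ha; lia.
Qed.

Definition minimal_language n (P : config S -> Prop) : {set window_type S n} :=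
  epsilon (inhabits set0) (fun L => (exists y, P y /\ language n y = L) /\
    forall y, P y -> (#|L| <= #|language n y|)%nat).

Lemma minimal_language_spec n P : (exists y, P y) ->
  (exists y, P y /\ language n y = minimal_language n P) /\
  forall y, P y -> (#|minimal_language n P| <= #|language n y|)%nat.
Proof.
move=> [y1 hy1]; apply: (epsilon_spec (inhabits set0) (fun L =>
  (exists y, P y /\ language n y = L) /\ forall y, P y -> (#|L| <= #|language n y|)%nat)).
have [k [[y [hy hk]] hmin]] :=
  least_nat (ex_intro (fun k => exists y, P y /\ #|language n y| = k) _
               (ex_intro _ y1 (conj hy1 erefl))).
exists (language n y); split; first by exists y.
by move=> y' hy'; rewrite hk; apply: hmin; exists y'.
Qed.

Fixpoint minimal_class (n : nat) : config S -> Prop :=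
  if n is n'.+1 then fun y => minimal_class n' y /\
    language n' y = minimal_language n' (minimal_class n')
  else fun y => X y /\ exists v, def (shift v y).

Lemma minimal_class_shift n y u : minimal_class n y -> minimal_class n (shift u y).
Proof.
elim: n y => [|n IH] y /= => [[hX [v hv]] | [h1 h2]].
  split; first exact: X_shift.
  by exists (v.1 - u.1, v.2 - u.2); rewrite shift_shift (_ : cadd _ u = v) //; cell_lia.
by split; [exact: IH | rewrite language_shift].
Qed.

Lemma minimal_class_mono n m y : (m <= n)%nat -> minimal_class n y -> minimal_class m y.
Proof.
elim: n => [|n IH] hm hy; first by have -> : m = 0%nat by lia.
have [->|hle] : m = n.+1 \/ (m <= n)%nat by lia.
  done.
by apply: IH => //; case: hy.
Qed.

Lemma minimal_class_def n : exists y, minimal_class n y /\ def y.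
Proof.
have [y hy] : exists y, minimal_class n y.
  elim: n => [|n IH] /=; first by exists x0; split=> //; exists (0, 0); rewrite shift0.
  by have [[y hy] _] := minimal_language_spec n IH; exists y.
have [_ [v hv]] := minimal_class_mono (leq0n n) hy.
by exists (shift v y); split=> //; exact: minimal_class_shift.
Qed.

Lemma minimal_point : exists zz, X zz /\ def zz /\ forall n, minimal_class n zz.
Proof.
pose ys n := epsilon (inhabits x0) (fun y => minimal_class n y /\ def y).
have hys : forall n, minimal_class n (ys n) /\ def (ys n).
  move=> n; apply: (epsilon_spec (inhabits x0) (fun y => minimal_class n y /\ def y)).
  exact: minimal_class_def.
have hl := cluster_spec ys; set zz := cluster ys in hl *.
have Xzz : X zz by apply: cluster_X hl _ => k; case: (minimal_class_mono (leq0n k) (hys k).1).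
have dzz : def zz by apply: cluster_def hl _ => k; case: (hys k).
exists zz; split=> //; split=> //; elim=> [|n IH] /=.
  by split=> //; exists (0, 0); rewrite shift0.
split=> //; have [_ hmin] := minimal_language_spec n (ex_intro _ _ IH).
have hsub : language n zz \subset minimal_language n (minimal_class n).
  apply/subsetP => t ht; have [k [hk ht']] := cluster_language hl ht n.+1.
  by have [_ <-] := minimal_class_mono hk (hys k).1.
by apply/eqP; rewrite eqEcard hsub /=; exact: hmin.
Qed.

Section MinimalPoint.
Variable zz : config S.
Hypothesis min_zz : forall n, minimal_class n zz.

Lemma minimal_languages y : X y -> (exists v, def (shift v y)) ->
  (forall n, language n y \subset language n zz) -> forall n, language n y = language n zz.
Proof.
move=> hX hd hs.
suff H : forall n, minimal_class n y.
  by move=> n; have [_ e1] := H n.+1; have [_ e2] := min_zz n.+1; rewrite e1 e2.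
elim=> [|n IH] /=; first by split.
split=> //; have [_ e2] := min_zz n.+1; rewrite -e2.
have [_ hmin] := minimal_language_spec n (ex_intro _ _ IH).
by apply/eqP; rewrite eqEcard hs /= e2; exact: hmin.
Qed.

Definition zz_like y := X y /\ def y /\ forall n, language n y \subset language n zz.

Lemma zz_like_closed xs w : cluster_point xs w -> (forall k, zz_like (xs k)) -> zz_like w.
Proof.
move=> hl hA; split; first by apply: cluster_X hl _ => k; case: (hA k).
split; first by apply: cluster_def hl _ => k; case: (hA k) => _ [].
move=> n; apply/subsetP => t ht; have [k [_ hk]] := cluster_language hl ht 0%nat.
by have [_ [_ hs]] := hA k; exact: (subsetP (hs n)).
Qed.

Lemma zz_like_language y n : zz_like y -> language n y = language n zz.
Proof.
move=> [hX [hd hs]]; apply: minimal_languages => //.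
by exists (0, 0); rewrite shift0.
Qed.

Lemma zz_like_shift y v : zz_like y -> def (shift v y) -> zz_like (shift v y).
Proof. by move=> [hX [_ hs]] hd; split; [exact: X_shift | split=> // m; rewrite language_shift]. Qed.

End MinimalPoint.

Theorem recurrent_point : exists z, X z /\ def z /\
  forall vs : nat -> cell, (forall k, def (shift (vs k) z)) ->
  exists u, infinitely (fun k => shift (cadd u (vs k)) z = z).
Proof.
have [zz [Xzz [dzz mzz]]] := minimal_point; set A := zz_like zz.
have [z [n0 [Az iso]]] := @isolated_point S A g
  (fun x y hx hy => g_inj hx.1 hy.1) (@zz_like_closed zz)
  zz (conj Xzz (conj dzz (fun n => subxx _))).
set n := maxn n0 Rd; have [Xz [dz _]] := Az.
have snap : forall y v, A y -> agree (Z.of_nat n) (shift v y) z -> shift v y = z.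
  move=> y v hy ha; apply: iso; last by apply: agree_mono ha; lia.
  by apply: zz_like_shift => //; apply: def_local dz; apply: agree_mono (agree_sym ha); lia.
exists z; split=> //; split=> // vs hvs.
have Avs : forall k, A (shift (vs k) z) by move=> k; apply: zz_like_shift.
have hl := cluster_spec (fun k => shift (vs k) z); set w := cluster _ in hl.
have Aw := zz_like_closed hl Avs.
have [u hu] : exists u, window n (shift u w) = window n z.
  apply/in_language; rewrite (zz_like_language mzz n Aw) -(zz_like_language mzz n Az).
  by apply/in_language; exists (0, 0); rewrite shift0.
have eu : shift u w = z by apply: snap Aw _; apply/window_eq.
exists u => k0; have [k [hk ha]] := hl (Z.to_nat (Z.of_nat n + Z.abs u.1 + Z.abs u.2)) k0.
exists k; split=> //; rewrite -shift_shift; apply: snap (Avs k) _.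
have ha' : agree (Z.of_nat n) (shift u (shift (vs k) z)) (shift u w).
  by apply: agree_shift; apply: agree_mono ha; lia.
by rewrite eu in ha'.
Qed.

End Recurrence.

Section SFT.
Variable S : finType.
Implicit Types x y z : config S.

Lemma pattern_bound (q : pattern S) : exists B, 0 <= B /\
  forall c a, List.In (c, a) q -> Z.abs c.1 <= B /\ Z.abs c.2 <= B.
Proof.
elim: q => [|[c0 a0] q [B [hB0 hB]]]; first by exists 0.
exists (B + Z.abs c0.1 + Z.abs c0.2); split; first lia.
by move=> c a /= [[-> _] | h]; [lia | have := hB c a h; lia].
Qed.

Lemma forbidden_bound (F : list (pattern S)) : exists K, 0 <= K /\ patterns_within F K.
Proof.
elim: F => [|q F [K [hK0 hK]]]; first by exists 0.
have [B [hB0 hB]] := pattern_bound q; exists (K + B); split; first lia.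
by move=> q' c a /= [<- | h] hc; [have := hB c a hc | have := hK q' c a h hc]; lia.
Qed.

Lemma occurs_shift q v x : occurs q (shift v x) -> occurs q x.
Proof. by move=> [u hu]; exists (cadd u v) => c a h; rewrite -(hu c a h) /shift; cell_lia. Qed.

Section Closure.
Variables (X : config S -> Prop) (F : list (pattern S)).
Hypothesis HX : forall x, X x <-> (forall q, List.In q F -> ~ occurs q x).

Lemma SFT_shift x v : X x -> X (shift v x).
Proof. by move=> /HX hx; apply/HX => q hq /occurs_shift; exact: hx. Qed.

(* An SFT is closed: forbidden patterns are seen in bounded boxes. *)
Lemma SFT_closed w : (forall N : nat, exists y, X y /\ agree (Z.of_nat N) y w) -> X w.
Proof.
move=> H; apply/HX => q hq [v hv].
have [B [hB0 hB]] := pattern_bound q.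
have [y [/HX hy ha]] := H (Z.to_nat (B + Z.abs v.1 + Z.abs v.2)).
apply: (hy q hq); exists v => c a h; rewrite -(hv c a h).
by have [b1 b2] := hB c a h; apply: ha; cbn; lia.
Qed.

End Closure.

Lemma equiv_of_phase x p u : (forall c, x c = p (csub c u)) -> subpat_equiv x p.
Proof.
move=> H; split=> q [v hv].
- by exists (cadd v u) => c a h; rewrite H -(hv c a h); cell_lia.
- by exists (csub v u) => c a h; rewrite -(hv c a h) H; cell_lia.
Qed.

Definition box_list (R : Z) : list cell :=
  let zs := map (fun i => - R + Z.of_nat i) (List.seq 0 (Z.to_nat (2 * R + 1))) in
  flat_map (fun i => map (fun j => (i, j)) zs) zs.

Lemma in_box_list R (d : cell) : Z.abs d.1 <= R -> Z.abs d.2 <= R -> List.In d (box_list R).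
Proof.
have in_zs : forall i : Z, Z.abs i <= R ->
    List.In i (map (fun i => - R + Z.of_nat i) (List.seq 0 (Z.to_nat (2 * R + 1)))).
  by move=> i h; apply/in_map_iff; exists (Z.to_nat (i + R)); split; [lia | apply/in_seq; lia].
case: d => d1 d2 /= h1 h2; apply/in_flat_map; exists d1; split; first exact: in_zs.
by apply/in_map_iff; exists d2; split=> //; exact: in_zs.
Qed.

Section Defect.
Variables (p : config S) (R : Z).

Definition defect y := ~ locally_p p R y (0, 0).

Lemma defect_not_equiv y : defect y -> ~ subpat_equiv y p.
Proof.
move=> hn [_ hge].
pose q : pattern S := map (fun d => (d, y d)) (box_list R).
have [v hv] : occurs q p.
  by apply: hge; exists (0, 0) => c a /in_map_iff [d [[<- <-] _]]; cell_lia.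
apply: hn; exists (- v.1, - v.2) => d h1 h2.
rewrite (_ : cadd (0, 0) d = d); last cell_lia.
rewrite -(hv d (y d) (in_map _ _ _ (in_box_list h1 h2))); cell_lia.
Qed.

Lemma defect_local x y : agree R x y -> defect x -> defect y.
Proof.
move=> ha hx [u hu]; apply: hx; exists u => d h1 h2; rewrite -hu //.
by rewrite (_ : cadd (0, 0) d = d); [exact: ha | cell_lia].
Qed.

Lemma defect_shift x c : ~ locally_p p R x c -> defect (shift c x).
Proof.
move=> hn [u hu]; apply: hn; exists (u.1 + c.1, u.2 + c.2) => d h1 h2.
by have := hu d h1 h2; rewrite /shift => e; rewrite (_ : cadd c d = cadd (cadd (0, 0) d) c) ?e; cell_lia.
Qed.

End Defect.
End SFT.

Section Repair.
Variable S : finType.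
Implicit Types x y z : config S.
Variables (X : config S -> Prop) (F : list (pattern S)) (K : Z).
Hypothesis HX : forall x, X x <-> (forall q, List.In q F -> ~ occurs q x).
Hypotheses (HK : patterns_within F K) (hK0 : 0 <= K).
Variables (p : config S) (r : Z).
Hypotheses (hr : 0 < r) (pr1 : period p (r, 0)) (pr2 : period p (0, r)).

Lemma frame_repair z u B : X z -> 0 <= B ->
  (forall c, B <= Z.abs c.1 \/ B <= Z.abs c.2 -> z c = p (csub c u)) ->
  exists y, X y /\ doubly_periodic y /\ agree B y z.
Proof.
move=> Xz hB Pz; set M := 2 * B + 2 * K + 1.
have hT : 0 < r * M by nia.
have hMT : M <= r * M by nia.
(* copy the horizontal strip [-B <= c.2 < r M - B] vertically *)
set y1 := glue z 0 1 (0, r * M) (r * M) (- B).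
have Xy1 : X y1.
  apply: (glue_in_X HX HK hK0) Xz; rewrite /lin; cbn [fst snd]; try lia.
  move=> d hd; rewrite (Pz (cadd d (0, r * M))) /=; last lia.
  by rewrite (Pz d); [rewrite -(p_period pr1 pr2 0 M (csub d u)); cell_lia | lia].
have y1_frame : forall c, B <= Z.abs c.1 -> y1 c = p (csub c u).
  move=> c hc; rewrite /y1 /glue; move: (strip_index _ _ _ _ c) => k.
  rewrite Pz /=; last lia.
  by rewrite -(p_period pr1 pr2 0 (- (k * M)) (csub c u)); cell_lia.
(* then copy the vertical strip [-B <= c.1 < r M - B] horizontally *)
set y2 := glue y1 1 0 (r * M, 0) (r * M) (- B).
have Xy2 : X y2.
  apply: (glue_in_X HX HK hK0) Xy1; rewrite /lin; cbn [fst snd]; try lia.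
  move=> d hd; rewrite (y1_frame (cadd d (r * M, 0))) /=; last lia.
  by rewrite (y1_frame d); [rewrite -(p_period pr1 pr2 M 0 (csub d u)); cell_lia | lia].
exists y2; split=> //; split.
  exists (r * M); split=> // c; split; first by apply: glue_period; rewrite /lin; cbn [fst snd]; lia.
  apply: glue_period_along; first by rewrite /lin; cbn [fst snd]; lia.
  by apply: glue_period; rewrite /lin; cbn [fst snd]; lia.
move=> d h1 h2.
rewrite /y2 glue_on_strip; last by rewrite /lin; cbn [fst snd]; lia.
by rewrite /y1 glue_on_strip //; rewrite /lin; cbn [fst snd]; lia.
Qed.

Lemma strip_repair z h uA uB W : X z -> period z h -> h <> (0, 0) -> 0 <= W ->
  (forall c, W <= lin h.2 (- h.1) c -> z c = p (csub c uA)) ->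
  (forall c, lin h.2 (- h.1) c <= - W -> z c = p (csub c uB)) ->
  exists y, X y /\ doubly_periodic y /\
    forall c, Z.abs (lin h.2 (- h.1) c) <= W -> y c = z c.
Proof.
move=> Xz Ph hne hW PA PB; set a := h.2 in PA PB *; set b := - h.1 in PA PB *.
have hab : 1 <= a * a + b * b.
  case: (Z.eq_dec a 0) => [ea|]; last nia; case: (Z.eq_dec b 0) => [eb|]; last nia.
  by case: hne; apply: cell_eq; rewrite /a /b in ea eb; cbn; lia.
set D := (Z.abs a + Z.abs b) * K.
have D0 : 0 <= D by apply: Z.mul_nonneg_nonneg; lia.
(* a period [t] crossing the strip, chosen so that the two phases match *)
set lam := 2 * W + 2 * D + 1 + Z.abs (lin a b (csub uA uB)).
set t : cell := (uA.1 - uB.1 + r * lam * a, uA.2 - uB.2 + r * lam * b).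
set T := lin a b t.
have hTge : 2 * W + 2 * D + 1 <= T.
  have -> : T = lin a b (csub uA uB) + lam * (r * (a * a + b * b)) by rewrite /T /t /lin /=; ring.
  have hr1 : 1 <= r * (a * a + b * b) by nia.
  have hlam : 0 <= lam by rewrite /lam; lia.
  have : lam <= lam * (r * (a * a + b * b)) by nia.
  by rewrite /lam; lia.
pose y := glue z a b t T (- W).
have Xy : X y.
  apply: (glue_in_X HX HK hK0 (T := T)) Xz; rewrite -/D; try lia.
  move=> d hd; rewrite (PA (cadd d t)); last by rewrite lin_add -/T; lia.
  rewrite (PB d); last lia.
  by rewrite -(p_period pr1 pr2 (lam * a) (lam * b) (csub d uB)) /t; cell_lia.
exists y; split=> //; split.
  apply: (doubly_periodic_of_periods (h := h) (t := t)).
  - by apply: glue_period_along; rewrite // /lin /a /b; ring.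
  - by apply: glue_period => //; lia.
  - by move: hTge; rewrite /T /lin /a /b; lia.
by move=> c hc; rewrite /y glue_on_strip //; lia.
Qed.

End Repair.

Section Main.
Variable S : finType.
Implicit Types x y z : config S.
Variables (X : config S -> Prop) (F : list (pattern S)) (K : Z).
Hypothesis HX : forall x, X x <-> (forall q, List.In q F -> ~ occurs q x).
Hypotheses (HK : patterns_within F K) (hK0 : 0 <= K).
Variable g : config S -> nat.
Hypothesis g_inj : forall x y, X x -> X y -> g x = g y -> x = y.

(* Recurrence along both axes gives two independent periods. *)
Lemma periodic_point_exists x0 : X x0 -> exists p, X p /\ doubly_periodic p.
Proof.
move=> hx0.
have [z [hz [_ rec]]] := @recurrent_point S X (SFT_shift HX) (SFT_closed HX) g g_inj
  (fun _ => True) 0%nat (fun _ _ _ _ => I) x0 hx0 I.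
have axis : forall e : cell, exists a, 0 < a /\ period z (a * e.1, a * e.2).
  move=> e; have [u hu] := rec (fun k => (Z.of_nat k * e.1, Z.of_nat k * e.2)) (fun _ => I).
  have [k [_ /period_of_shift P1]] := hu 0%nat; have [k' [hk' /period_of_shift P2]] := hu k.+1.
  exists (Z.of_nat k' - Z.of_nat k); split; first lia.
  by apply: (period_ext (period_lin (-1) 1 P1 P2)); cbn [cadd fst snd]; ring.
have [a [ha Pa]] := axis (1, 0); have [b [hb Pb]] := axis (0, 1).
by exists z; split=> //; apply: (doubly_periodic_of_periods Pa Pb); cbn; nia.
Qed.

Variables (p : config S) (r : Z).
Hypotheses (hr : 0 < r) (pr1 : period p (r, 0)) (pr2 : period p (0, r)).

(* Without defects, all points of [X] would be translates of [p]. *)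
Lemma defect_point_exists : (exists x y, X x /\ X y /\ ~ subpat_equiv x y) ->
  exists x, X x /\ defect p r x.
Proof.
move=> [x0 [y0 [hx0 [hy0 hxy]]]]; apply: NNPP => H.
have translate : forall x, X x -> exists u, forall c, x c = p (csub c u).
  move=> x hx.
  have good : forall c, True -> locally_p p r x c.
    move=> c _; apply: NNPP => hn; apply: H.
    by exists (shift c x); split; [exact: SFT_shift | exact: defect_shift].
  have [u hu] := region_phase hr (Z.le_refl r) pr1 pr2 good (c0 := (0, 0))
    (erefl : Z.abs 1 = 1) (erefl : Z.abs 1 = 1) (fun _ _ => I) (fun _ _ => I) I.
  by exists u => c; apply: hu.
have [u /equiv_of_phase [h1 h2]] := translate x0 hx0.
have [u' /equiv_of_phase [h3 h4]] := translate y0 hy0.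
by apply: hxy; split=> q hq; [apply: h1; apply: h4 | apply: h3; apply: h2].
Qed.

Section Defects.
Variable z : config S.
Hypothesis Xz : X z.
Hypothesis rec : forall vs : nat -> cell, (forall k, defect p r (shift (vs k) z)) ->
  exists u, infinitely (fun k => shift (cadd u (vs k)) z = z).

(* A quantity [nu] that cannot grow along the periods of [z] is bounded on
   the defects of [z]: an unbounded sequence of defects would return to [z]
   along a period. *)
Lemma defects_bounded (nu : cell -> Z) :
  (forall u v, period z (cadd u v) -> Z.abs (nu v) <= Z.abs (nu u)) ->
  exists W, forall c, ~ locally_p p r z c -> Z.abs (nu c) <= W.
Proof.
move=> Hnu; apply: NNPP => H.
pose P k c := ~ locally_p p r z c /\ Z.of_nat k < Z.abs (nu c).
have hvs : forall k, P k (epsilon (inhabits (0, 0)) (P k)).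
  move=> k; apply: epsilon_spec; apply: NNPP => Hk; apply: H.
  exists (Z.of_nat k) => c hc; apply: NNPP => hlt; apply: Hk; exists c; split=> //; lia.
have [u hu] := rec (fun k => defect_shift (hvs k).1).
have [k [hk /period_of_shift e]] := hu (Z.to_nat (Z.abs (nu u))).
by have := Hnu _ _ e; have := (hvs k).2; lia.
Qed.

(* Without periods, the defects of [z] lie in a box. *)
Lemma repair_aperiodic : (forall h, period z h -> h = (0, 0)) ->
  exists y, X y /\ doubly_periodic y /\ agree r y z.
Proof.
move=> H0.
have norm_mono : forall u v, period z (cadd u v) ->
    Z.abs (Z.max (Z.abs v.1) (Z.abs v.2)) <= Z.abs (Z.max (Z.abs u.1) (Z.abs u.2)).
  by move=> u v /H0 e; have := congr1 fst e; have := congr1 snd e; cbn; lia.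
have [B0 hB0] := defects_bounded norm_mono.
set B := Z.max B0 0 + r + 1.
have [u hu] : exists u, forall c, B <= Z.abs c.1 \/ B <= Z.abs c.2 -> z c = p (csub c u).
  apply: (frame_phase hr (Z.le_refl r) pr1 pr2) => c hc.
  by apply: NNPP => /hB0; rewrite /B in hc; lia.
have [y [Xy [dpy ha]]] := frame_repair HX HK hK0 hr pr1 pr2 Xz (ltac:(lia) : 0 <= B) hu.
by exists y; do !split=> //; apply: agree_mono ha; lia.
Qed.

(* If the periods of [z] are the multiples of one direction [h], the defects
   of [z] lie in a strip along [h]. *)
Lemma repair_one_period h : period z h -> h <> (0, 0) ->
  (forall h', period z h' -> lin h.2 (- h.1) h' = 0) ->
  exists y, X y /\ doubly_periodic y /\ agree r y z.
Proof.
move=> Ph hne Hker.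
have lin_mono : forall u v, period z (cadd u v) ->
    Z.abs (lin h.2 (- h.1) v) <= Z.abs (lin h.2 (- h.1) u).
  by move=> u v /Hker; rewrite lin_add; lia.
have [W0 hW0] := defects_bounded lin_mono.
set W := Z.max W0 0 + (Z.abs h.2 + Z.abs (- h.1)) * r + 1.
have good : forall c, W <= Z.abs (lin h.2 (- h.1) c) -> locally_p p r z c.
  by move=> c hc; apply: NNPP => /hW0; rewrite /W in hc; nia.
have nz : forall s, Z.abs s = 1 -> (s * h.2, s * - h.1) <> (0, 0).
  by move=> s hs [e1 e2]; apply: hne; apply: cell_eq; cbn; nia.
have [uA hA] : exists u, forall c, W <= lin (1 * h.2) (1 * - h.1) c -> z c = p (csub c u).
  apply: (half_plane_phase hr (Z.le_refl r) pr1 pr2 (nz 1 erefl)) => c hc.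
  by apply: good; rewrite /lin in hc *; lia.
have [uB hB] : exists u, forall c, W <= lin (-1 * h.2) (-1 * - h.1) c -> z c = p (csub c u).
  apply: (half_plane_phase hr (Z.le_refl r) pr1 pr2 (nz (-1) erefl)) => c hc.
  by apply: good; rewrite /lin in hc *; lia.
have [y [Xy [dpy hy]]] := strip_repair HX HK hK0 hr pr1 pr2 (W := W) Xz Ph hne
  ltac:(rewrite /W; nia) (fun c hc => hA c ltac:(rewrite /lin in hc *; lia))
  (fun c hc => hB c ltac:(rewrite /lin in hc *; lia)).
exists y; split=> //; split=> // d h1 h2; apply: hy.
by have := lin_bound (a := h.2) (b := - h.1) h1 h2; rewrite /W /lin; nia.
Qed.

Lemma periodic_repair : exists y, X y /\ doubly_periodic y /\ agree r y z.
Proof.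
case: (classic (exists h, period z h /\ h <> (0, 0))) => [[h [Ph hne]] | H0]; last first.
  by apply: repair_aperiodic => h hh; apply: NNPP => hn; apply: H0; exists h.
case: (classic (exists h', period z h' /\ lin h.2 (- h.1) h' <> 0)) => [[h' [Ph' hf]] | H1];
  last by apply: (repair_one_period Ph hne) => h' hh; apply: NNPP => hn; apply: H1; exists h'.
exists z; split=> //; split=> //.
by apply: (doubly_periodic_of_periods Ph Ph'); move: hf; rewrite /lin; lia.
Qed.

End Defects.
End Main.

Theorem mainTheorem11 (S : finType) (X : config S -> Prop) :
  is_SFT X ->
  countable_set X ->
  (* the subpattern poset X/≈ has at least two elements *)
  (exists x y, X x /\ X y /\ ~ subpat_equiv x y) ->
  exists x y, X x /\ X y /\ doubly_periodic x /\ doubly_periodic y /\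
              ~ subpat_equiv x y.
Proof.
move=> [F HX] [g g_inj] two_classes.
have [K [hK0 HK]] := forbidden_bound F.
have [x0 [_ [hx0 _]]] := two_classes.
have [p [Xp dpp]] := periodic_point_exists HX g_inj hx0.
have [r [hr hp]] := dpp.
have pr1 : period p (r, 0) by move=> c; case: (hp c).
have pr2 : period p (0, r) by move=> c; case: (hp c).
have [x [Xx dx]] := defect_point_exists HX hr pr1 pr2 two_classes.
have defect_loc : forall x y, agree (Z.of_nat (Z.to_nat r)) x y -> defect p r x -> defect p r y.
  by move=> ? ? ha; apply: defect_local; apply: agree_mono ha; lia.
have [z [Xz [dz rec]]] := @recurrent_point S X (SFT_shift HX) (SFT_closed HX) g g_inj
  (defect p r) (Z.to_nat r) defect_loc x Xx dx.
(* a doubly periodic point that keeps the defect of [z], hence is not equivalent to [p] *)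
have [y [Xy [dpy ha]]] := periodic_repair HX HK hK0 hr pr1 pr2 Xz rec.
exists y, p; do !split=> //.
exact: defect_not_equiv (defect_local (agree_sym ha) dz).
Qed.
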